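(* Let $H=(E,\{X_i : i\in[n]\})$ be a hypergraph and let $t_1,\dots,t_n$ be integers with $0\le t_i\le |X_i|$, such that: (H2) $|X_i\cap X_j|\le 1$ for all distinct $i,j\in[n]$; (H3) there are no $a,b,c\in E$ such that $\{a,b\},\{a,c\},\{b,c\}$ are all hyperedges of $H$; (T) for each $i\in[n]$, either $t_i=1$ or $\min\{w(e) : e\in X_i\}\le t_i<|X_i|$. Let $\rho$ be the polymatroid on $E$ given by $\rho(A)=\sum_{i=1}^n\min\{|A\cap X_i|,t_i\}$ for $A\subseteq E$ (equivalently $\rho=\sum_{i=1}^n r_{M_i}$ with $M_i=U_{t_i,X_i}\oplus U_{0,E-X_i}$). Then for each positive integer $k$ there is a bijection from the set of proper $k$-colorings $c:[n]\to[k]$ of the line graph $G_H$ onto $\Delta_\rho^k$. Consequently, the least $k$ with $\rho\in\mathcal{D}_k$ is $k=\chi(G_H)$, and $|\Delta_\rho^k|=\chi(G_H;k)$ for every positive integer $k$.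
   Context: A polymatroid on a finite set $E$ is a function $\rho:2^E\to\mathbb{Z}$ that is normalized ($\rho(\emptyset)=0$), non-decreasing, and submodular. A hypergraph is a pair $H=(E,\mathcal{E})$ where $E$ is a finite set and $\mathcal{E}=\{X_i:i\in[n]\}$ is a set of nonempty subsets of $E$ (the hyperedges), $[n]=\{1,\dots,n\}$. For $e\in E$, $w(e)$ is the number of hyperedges containing $e$. The line graph $G_H$ has vertex set $[n]$, with $ij$ an edge iff $i\ne j$ and $X_i\cap X_j\ne\emptyset$. $U_{r,X}$ is the rank-$r$ uniform matroid on $X$ (bases are the $r$-subsets of $X$). For a polymatroid $\rho$ on $E$ and positive integer $k$, $\Delta_\rho^k$ is the set of $k$-tuples $(N_1,\dots,N_k)$ of matroids on $E$ with $\rho=r_{N_1}+\cdots+r_{N_k}$ (pointwise sum of rank functions). $\mathcal{D}_k$ is the class of polymatroids $\rho$ for which $\Delta_\rho^k\neq\emptyset$ ($k$-decomposable polymatroids). $\chi(G_H)$ and $\chi(G_H;k)$ are the chromatic number and chromatic polynomial of $G_H$. *)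

From mathcomp Require Import all_boot.
Set Implicit Arguments. Unset Strict Implicit. Unset Printing Implicit Defensive.

Section Defs.
Variable E : finType.

Definition is_matroid (I : {set {set E}}) : bool :=
  [&& set0 \in I,
      [forall A : {set E}, forall B : {set E},
         (B \in I) && (A \subset B) ==> (A \in I)] &
      [forall A : {set E}, forall B : {set E},
         [&& A \in I, B \in I & #|A| < #|B|] ==>
         [exists x in B :\: A, x |: A \in I]]].

Definition mrank (I : {set {set E}}) (A : {set E}) : nat :=
  \max_(B in I | B \subset A) #|B|.

Definition Delta (k : nat) (rho : {set E} -> nat)
  : {set {ffun 'I_k -> {set {set E}}}} :=
  [set N : {ffun 'I_k -> {set {set E}}} | [forall j, is_matroid (N j)] &&
           [forall A : {set E}, rho A == \sum_(j < k) mrank (N j) A]].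

Variable n : nat.
Variable X : 'I_n -> {set E}.

Definition weight (e : E) : nat := #|[set i | e \in X i]|.

Definition ladj (i j : 'I_n) : bool := (i != j) && (X i :&: X j != set0).

Definition proper_col (k : nat) (c : {ffun 'I_n -> 'I_k}) : bool :=
  [forall i, forall j, ladj i j ==> (c i != c j)].

Definition chrom_poly (k : nat) : nat := #|[set c | @proper_col k c]|.

Lemma chrom_ex : exists k, [exists c, @proper_col k c].
Proof.
exists n; apply/existsP; exists [ffun i => i].
apply/forallP => i; apply/forallP => j; apply/implyP => /andP [h _].
by rewrite !ffunE.
Qed.

Definition chrom_number : nat := ex_minn chrom_ex.

End Defs.

From mathcomp Require Import all_boot.
From mathcomp Require Import zify.
Set Implicit Arguments. Unset Strict Implicit. Unset Printing Implicit Defensive.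

Section MatroidRank.
Variables (T : finType) (I : {set {set T}}).
Hypothesis matI : is_matroid I.
Implicit Types A B C G S : {set T}.

Lemma matroid0 : set0 \in I.
Proof. by case/and3P: matI. Qed.

Lemma matroidS A B : B \in I -> A \subset B -> A \in I.
Proof.
case/and3P: matI => _ /forallP /(_ A) /forallP /(_ B) /implyP sub _ IB AB.
by apply: sub; rewrite IB AB.
Qed.

Lemma matroid_aug A B : A \in I -> B \in I -> #|A| < #|B| ->
  exists2 x, x \in B :\: A & x |: A \in I.
Proof.
case/and3P: matI => _ _ /forallP /(_ A) /forallP /(_ B) /implyP aug IA IB ltAB.
have /existsP [x /andP [? ?]] : [exists x in B :\: A, x |: A \in I] by apply: aug; rewrite IA IB.
by exists x.
Qed.

Lemma mrank_ge A B : B \in I -> B \subset A -> #|B| <= mrank I A.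
Proof. by move=> IB BA; apply: (@leq_bigmax_cond _ _ (fun B => #|B|)); rewrite IB. Qed.

Lemma mrank_witness A : exists2 B, (B \in I) && (B \subset A) & #|B| = mrank I A.
Proof.
have : 0 < #|[pred B | (B \in I) && (B \subset A)]|.
  by apply/card_gt0P; exists set0; rewrite inE matroid0 sub0set.
by case/(eq_bigmax_cond (fun B => #|B|)) => B IB rB; exists B; rewrite // /mrank rB.
Qed.

Lemma mrank_le_card A : mrank I A <= #|A|.
Proof. by case: (mrank_witness A) => B /andP [_ BA] <-; apply: subset_leq_card. Qed.

Lemma indep_mrankE A : (A \in I) = (mrank I A == #|A|).
Proof.
apply/idP/idP => [IA | /eqP rA]; first by rewrite eqn_leq mrank_le_card mrank_ge.
case: (mrank_witness A) rA => B /andP [IB BA] <- cardBA.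
suff -> : A = B by [].
by apply/eqP; rewrite eq_sym eqEcard BA cardBA leqnn.
Qed.

Lemma mrank_indep A : A \in I -> mrank I A = #|A|.
Proof. by rewrite indep_mrankE => /eqP. Qed.

Lemma mrankS A B : A \subset B -> mrank I A <= mrank I B.
Proof.
move=> AB; case: (mrank_witness A) => C /andP [IC CA] <-.
by apply: mrank_ge; rewrite // (subset_trans CA).
Qed.

Lemma mrank0 : mrank I set0 = 0.
Proof. by apply/eqP; rewrite -leqn0 -(cards0 T) mrank_le_card. Qed.

Lemma indep_extend J S : J \in I -> J \subset S ->
  exists2 K, [&& K \in I, J \subset K & K \subset S] & #|K| = mrank I S.
Proof.
move=> IJ JS; move: {2}(mrank I S - #|J|) (erefl (mrank I S - #|J|)) => d.
elim: d J IJ JS => [|d IHd] J IJ JS dE.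
  exists J; first by rewrite IJ subxx JS.
  by apply/eqP; rewrite eqn_leq mrank_ge //=; move/eqP: dE; rewrite subn_eq0.
case: (mrank_witness S) => K /andP [IK KS] cardK.
have [|x] := matroid_aug IJ IK; first by lia.
rewrite inE => /andP [xJ xK] IxJ.
have xJS : x |: J \subset S by rewrite subUset sub1set (subsetP KS) ?JS.
have [|K' /and3P [IK' xJK' K'S] <-] := IHd (x |: J) IxJ xJS; first by rewrite cardsU1 xJ; lia.
by exists K'; rewrite // IK' K'S (subset_trans _ xJK') ?subsetUr.
Qed.

Lemma mrank_submod A B : mrank I (A :|: B) + mrank I (A :&: B) <= mrank I A + mrank I B.
Proof.
case: (mrank_witness (A :&: B)) => J /andP [IJ JAB] <-.
have [|K /and3P [IK JK KAB] <-] := indep_extend IJ (_ : J \subset A :|: B).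
  by rewrite (subset_trans JAB) // subIset ?subsetUl.
have KA : #|K :&: A| <= mrank I A by rewrite mrank_ge ?(matroidS IK) ?subsetIl ?subsetIr.
have KB : #|K :&: B| <= mrank I B by rewrite mrank_ge ?(matroidS IK) ?subsetIl ?subsetIr.
have KE : (K :&: A) :|: (K :&: B) = K by rewrite -setIUr; apply/setIidPl.
have JKAB : #|J| <= #|(K :&: A) :&: (K :&: B)|.
  by rewrite subset_leq_card // setIACA setIid subsetI JK.
by have := cardsUI (K :&: A) (K :&: B); rewrite KE; lia.
Qed.

Lemma mrank_subadd A B : mrank I (A :|: B) <= mrank I A + mrank I B.
Proof. by have := mrank_submod A B; lia. Qed.

Definition nonloops := [set e | [set e] \in I].

Lemma indep_sub_nonloops B : B \in I -> B \subset nonloops.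
Proof. by move=> IB; apply/subsetP => e eB; rewrite inE (matroidS IB) ?sub1set. Qed.

Lemma mrank_le_nonloops A : mrank I A <= #|A :&: nonloops|.
Proof.
case: (mrank_witness A) => B /andP [IB BA] <-.
by rewrite subset_leq_card // subsetI BA indep_sub_nonloops.
Qed.

Lemma mrankI_nonloops A : mrank I (A :&: nonloops) = mrank I A.
Proof.
apply/eqP; rewrite eqn_leq mrankS ?subsetIl //.
case: (mrank_witness A) => B /andP [IB BA] <-.
by rewrite mrank_ge // subsetI BA indep_sub_nonloops.
Qed.

Lemma mrank1 e : mrank I [set e] = (e \in nonloops).
Proof.
case: (boolP (e \in nonloops)) => e_nl; first by move: e_nl; rewrite inE => /mrank_indep ->; rewrite cards1.
have e0 : [set e] :&: nonloops = set0.
  by apply/setP => x; rewrite !inE; case: eqP => // ->; move: e_nl; rewrite inE => /negbTE.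
by apply/eqP; rewrite -leqn0 -(cards0 T) -e0 mrank_le_nonloops.
Qed.

Lemma mrank_add_parallel S p g : p \in S -> p \in nonloops -> [set p; g] \notin I ->
  mrank I (g |: S) <= mrank I S.
Proof.
move=> pS p_nl pg_dep.
have := mrank_submod S [set p; g].
have -> : S :|: [set p; g] = g |: S.
  by apply/setP => z; rewrite !inE; case: (z =P p) => [->|_]; rewrite ?pS ?orbT //= orbC.
have : 1 <= mrank I (S :&: [set p; g]).
  by rewrite (leq_trans _ (mrankS (_ : [set p] \subset _))) ?mrank1 ?p_nl // sub1set !inE pS eqxx.
have : mrank I [set p; g] <= 1.
  move: pg_dep; rewrite indep_mrankE cards2.
  by have := mrank_le_card [set p; g]; rewrite cards2; case: (p != g); lia.
lia.
Qed.

Lemma mrank_add_parallels S G :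
  (forall g, g \in G -> exists2 p, p \in S & (p \in nonloops) && ([set p; g] \notin I)) ->
  mrank I (S :|: G) <= mrank I S.
Proof.
have -> : G = [set x in enum G] by apply/setP => x; rewrite inE mem_enum.
elim: (enum G) => [|g s IHs] par; first by rewrite (_ : [set x in [::]] = set0) ?setU0 //; apply/setP.
have -> : S :|: [set x in g :: s] = g |: (S :|: [set x in s]).
  by apply/setP => x; rewrite !inE orbCA.
have [|p pS /andP [p_nl pg_dep]] := par g; first by rewrite inE mem_head.
apply: leq_trans (IHs _); first by rewrite (mrank_add_parallel (p := p)) // inE pS.
by move=> h; rewrite inE => hs; apply: par; rewrite !inE hs orbT.
Qed.

Lemma parallel_trans x y z : y \in nonloops -> [set x; y] \notin I -> [set y; z] \notin I ->
  x != z -> [set x; z] \notin I.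
Proof.
move=> y_nl xy_dep yz_dep xz; rewrite indep_mrankE cards2 xz.
have : mrank I [set x; z] <= mrank I [set x; y].
  apply: leq_trans (mrank_add_parallel (p := y) _ y_nl yz_dep); last by rewrite !inE eqxx orbT.
  by rewrite mrankS //; apply/subsetP => w; rewrite !inE => /orP [] ->; rewrite ?orbT.
have := mrank_le_card [set x; y]; move: xy_dep; rewrite indep_mrankE cards2.
by case: (x != y); lia.
Qed.

Lemma mrank_bigcup (J : finType) (P : pred J) (F : J -> {set T}) :
  mrank I (\bigcup_(i | P i) F i) <= \sum_(i | P i) mrank I (F i).
Proof.
apply: (big_ind2 (fun U s => mrank I U <= s)) => //; first by rewrite mrank0.
by move=> U1 s1 U2 s2 le1 le2; apply: leq_trans (mrank_subadd U1 U2) (leq_add le1 le2).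
Qed.

Definition nullity A := #|A :&: nonloops| - mrank I A.

Lemma nullity_nonloops A : A \subset nonloops -> nullity A = #|A| - mrank I A.
Proof. by move=> A_nl; rewrite /nullity (setIidPl A_nl). Qed.

Lemma nullity_gt0 A : A \subset nonloops -> A \notin I -> 0 < nullity A.
Proof.
move=> A_nl; rewrite nullity_nonloops // indep_mrankE.
by have := mrank_le_card A; lia.
Qed.

Lemma nullity0_indep A : A \subset nonloops -> nullity A = 0 -> A \in I.
Proof.
move=> A_nl; rewrite nullity_nonloops // indep_mrankE.
by have := mrank_le_card A; lia.
Qed.

Lemma nullityS A B : A \subset B -> nullity A <= nullity B.
Proof.
move=> AB; set C := (B :&: nonloops) :\: A.
have rB : mrank I B <= mrank I (A :|: C).
  rewrite -mrankI_nonloops mrankS //; apply/subsetP => x; rewrite !inE.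
  by case: (x \in A); rewrite ?andbT.
have cardC : #|C| = #|B :&: nonloops| - #|A :&: nonloops|.
  rewrite cardsD; congr (_ - _); apply: eq_card => x; rewrite !inE.
  by case xA: (x \in A); rewrite ?andbF ?andbT // (subsetP AB _ xA).
have := mrank_subadd A C; have := mrank_le_card C.
have := subset_leq_card (setSI nonloops AB).
have := mrank_le_nonloops A; have := mrank_le_nonloops B.
rewrite /nullity; lia.
Qed.

Lemma nullity_supermod A B : nullity A + nullity B <= nullity (A :|: B) + nullity (A :&: B).
Proof.
have := mrank_submod A B; have := cardsUI (A :&: nonloops) (B :&: nonloops).
rewrite -setIUl setIACA setIid.
have := mrank_le_nonloops A; have := mrank_le_nonloops B.
have := mrank_le_nonloops (A :|: B); have := mrank_le_nonloops (A :&: B).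
rewrite /nullity; lia.
Qed.

Lemma nullityD1 A x : nullity A <= nullity (A :\ x) + 1.
Proof.
have rA : mrank I (A :\ x) <= mrank I A by rewrite mrankS ?subsetDl.
have cardA : #|A :&: nonloops| <= #|(A :\ x) :&: nonloops| + #|[set x]|.
  apply: leq_trans (leq_card_setU _ _); rewrite subset_leq_card //.
  by apply/subsetP => y; rewrite !inE; case: (y == x) => /=; rewrite ?orbT ?orbF.
rewrite cards1 in cardA.
have := mrank_le_nonloops (A :\ x); rewrite /nullity; lia.
Qed.

Lemma nullity_ge_parallels A G : G \subset A ->
  (forall g, g \in G -> g \in nonloops /\
     exists2 p, p \in A :\: G & (p \in nonloops) && ([set p; g] \notin I)) ->
  #|G| <= nullity A.
Proof.
move=> GA par.
have G_nl : G \subset A :&: nonloops.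
  by rewrite subsetI GA; apply/subsetP => g /par [].
have rA : mrank I A <= mrank I (A :\: G).
  rewrite -{1}(setID A G) (setIidPr GA) setUC mrank_add_parallels // => g /par [_ [p pAG /andP [p_nl pg]]].
  by exists p; rewrite ?p_nl.
have cardA : #|A :&: nonloops| = #|(A :\: G) :&: nonloops| + #|G|.
  rewrite -(cardsID G (A :&: nonloops)) (setIidPr G_nl) addnC; congr (#|_| + _).
  by rewrite setIDAC.
have := mrank_le_nonloops (A :\: G); rewrite /nullity; lia.
Qed.

End MatroidRank.

Lemma exists_subset_card (T : finType) (S : {set T}) m : m <= #|S| ->
  exists2 S' : {set T}, S' \subset S & #|S'| = m.
Proof.
elim: m => [|m IHm] leS; first by exists set0; rewrite ?sub0set ?cards0.
have [S' S'S cardS'] := IHm (ltnW leS).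
have /subsetPn [x xS xS'] : ~~ (S \subset S').
  by apply/negP => /subset_leq_card; lia.
by exists (x |: S'); rewrite ?subUset ?sub1set ?xS // cardsU1 xS' cardS'.
Qed.

Lemma sum_nat_bool (I : finType) (b : pred I) : \sum_i (b i : nat) = #|[set i | b i]|.
Proof. by rewrite -sum1_card [RHS]big_mkcond; apply: eq_bigr => i _; rewrite inE; case: (b i). Qed.

Lemma cards1I (T : finType) (x : T) (A : {set T}) : #|[set x] :&: A| = (x \in A).
Proof.
have [xA|xNA] := boolP (x \in A); first by rewrite (setIidPl _) ?cards1 ?sub1set.
by apply/eqP; rewrite cards_eq0 -subset0; apply/subsetP => y; rewrite !inE => /andP [/eqP -> /(negP xNA)].
Qed.

Definition hyper_rank (E : finType) (n : nat) (X : 'I_n -> {set E}) (t : 'I_n -> nat)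
  (A : {set E}) := \sum_(i < n) minn #|A :&: X i| (t i).

Section ColourMatroid.
Variables (E : finType) (n : nat) (X : 'I_n -> {set E}) (t : 'I_n -> nat).
Variables (k : nat) (c : {ffun 'I_n -> 'I_k}).
Hypothesis c_proper : proper_col X c.
Implicit Types A B : {set E}.
Implicit Types j : 'I_k.

Definition colour_class j := \bigcup_(i | c i == j) X i.

Definition colour_matroid j := [set B : {set E} | (B \subset colour_class j) &&
  [forall i, (c i == j) ==> (#|B :&: X i| <= t i)]].

Lemma same_colour_eq i i' x : x \in X i -> x \in X i' -> c i = c i' -> i = i'.
Proof.
move=> xi xi' cii'; apply/eqP; apply: contraT => ii'.
have := forallP (forallP c_proper i) i'.
rewrite /ladj ii' cii' eqxx implybF negbK => /eqP /setP /(_ x).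
by rewrite !inE xi xi'.
Qed.

Lemma card_colour_class j B : B \subset colour_class j ->
  #|B| = \sum_(i | c i == j) #|B :&: X i|.
Proof.
move=> Bj; rewrite -sum1_card.
under eq_bigr => x xB.
  have /bigcupP [i0 ci0 xi0] := subsetP Bj x xB.
  have -> : 1 = \sum_(i | c i == j) (x \in X i).
    rewrite (bigD1 i0) //= xi0 big1 // => i /andP [ci i0i].
    apply/eqP; rewrite eqb0; apply: contra i0i => xi.
    by rewrite (same_colour_eq xi xi0) // (eqP ci) (eqP ci0).
  over.
rewrite exchange_big /=; apply: eq_bigr => i _.
by rewrite -sum1_card big_mkcond [RHS]big_mkcond; apply: eq_bigr => x _; rewrite inE; case: (x \in B).
Qed.

Lemma colour_matroid_is_matroid j : is_matroid (colour_matroid j).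
Proof.
apply/and3P; split.
- by rewrite inE sub0set; apply/forallP => i; rewrite set0I cards0 implybT.
- apply/forallP => A; apply/forallP => B; apply/implyP => /andP [].
  rewrite !inE => /andP [Bj /forallP Bt] AB; rewrite (subset_trans AB Bj).
  apply/forallP => i; apply/implyP => /(implyP (Bt i)); apply: leq_trans.
  by rewrite subset_leq_card ?setSI.
apply/forallP => A; apply/forallP => B; apply/implyP => /and3P [].
rewrite !inE => /andP [Aj /forallP At] /andP [Bj /forallP Bt].
rewrite (card_colour_class Aj) (card_colour_class Bj) => ltAB.
have [i0 /andP [ci0 lt0]] : exists i, (c i == j) && (#|A :&: X i| < #|B :&: X i|).
  apply/existsP; apply: contraLR ltAB; rewrite negb_exists -leqNgt => /forallP le.
  by apply: leq_sum => i ci; move: (le i); rewrite ci /= leqNgt negbK.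
have /subsetPn [x /setIP [xB xi0] xA] : ~~ (B :&: X i0 \subset A).
  by apply: contraTN lt0 => BA; rewrite -leqNgt subset_leq_card // subsetI BA subsetIr.
apply/existsP; exists x; rewrite !inE xA xB /= subUset sub1set Aj andbT.
apply/andP; split; first by apply/bigcupP; exists i0.
apply/forallP => i; apply/implyP => ci.
rewrite setIUl; apply: leq_trans (leq_card_setU _ _) _; rewrite cards1I.
have [<-|i0i] := eqVneq i0 i; first by rewrite xi0 (leq_trans lt0) // (implyP (Bt i0)).
have -> : x \in X i = false.
  by apply: contra_neqF i0i => xi; rewrite (same_colour_eq xi0 xi) // (eqP ci) (eqP ci0).
exact: (implyP (At i)).
Qed.

Lemma mrank_colour_matroid j A :
  mrank (colour_matroid j) A = \sum_(i | c i == j) minn #|A :&: X i| (t i).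
Proof.
apply/eqP; rewrite eqn_leq; apply/andP; split.
  apply/bigmax_leqP => B /andP []; rewrite inE => /andP [Bj /forallP Bt] BA.
  rewrite (card_colour_class Bj); apply: leq_sum => i ci.
  by rewrite leq_min (implyP (Bt i) ci) subset_leq_card ?setSI.
have S_ex i : exists S : {set E}, (S \subset A :&: X i) && (#|S| == minn #|A :&: X i| (t i)).
  have [S ? cardS] := exists_subset_card (geq_minl #|A :&: X i| (t i)).
  by exists S; rewrite cardS eqxx andbT.
pose S i := xchoose (S_ex i).
have /all_and2 [SAX cardS] : forall i, S i \subset A :&: X i /\ #|S i| = minn #|A :&: X i| (t i).
  by move=> i; have /andP [? /eqP ?] := xchooseP (S_ex i).
pose B := \bigcup_(i | c i == j) S i.
have SX i : S i \subset X i by apply: subset_trans (SAX i) (subsetIr _ _).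
have BX i : c i == j -> B :&: X i = S i.
  move=> ci; apply/setP => x; rewrite inE; apply/andP/idP => [[/bigcupP [i' ci' xi'] xi]|xS].
    by rewrite (same_colour_eq xi (subsetP (SX i') x xi')) // (eqP ci) (eqP ci').
  by split; [apply/bigcupP; exists i | apply: (subsetP (SX i))].
have Bj : B \subset colour_class j.
  by apply/bigcupsP => i ci; apply: subset_trans (SX i) _; apply: bigcup_sup.
have BA : B \subset A.
  by apply/bigcupsP => i _; apply: subset_trans (SAX i) (subsetIl _ _).
have IB : B \in colour_matroid j.
  rewrite inE Bj; apply/forallP => i; apply/implyP => ci.
  by rewrite BX // cardS geq_minr.
rewrite (leq_trans _ (mrank_ge IB BA)) // (card_colour_class Bj).
by rewrite leq_eqVlt; apply/orP; left; apply/eqP; apply: eq_bigr => i ci; rewrite BX ?cardS.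
Qed.

Lemma colour_matroid_nonloops i : (forall h, 0 < t h) ->
  X i \subset nonloops (colour_matroid (c i)).
Proof.
move=> t_gt0; apply/subsetP => x xi; rewrite inE [_ \in colour_matroid _]inE sub1set.
apply/andP; split.
  by apply/bigcupP; exists i.
by apply/forallP => h; rewrite cards1I (leq_trans (leq_b1 _) (t_gt0 h)) implybT.
Qed.

Lemma mrank_colour_matroid_edge i : mrank (colour_matroid (c i)) (X i) <= t i.
Proof.
rewrite mrank_colour_matroid (bigD1 i) //= big1 ?addn0 ?setIid ?geq_minr // => h /andP [ch hi].
apply/eqP; rewrite -leqn0 geq_min leqn0 cards_eq0; apply/orP; left; apply/eqP/setP => x.
rewrite !inE.
by apply/negP => /andP [xi xh]; move: hi; rewrite (same_colour_eq xh xi) ?eqxx // (eqP ch).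
Qed.

Lemma colour_matroids_in_Delta :
  [ffun j => colour_matroid j] \in Delta k (hyper_rank X t).
Proof.
rewrite inE; apply/andP; split.
  by apply/forallP => j; rewrite ffunE colour_matroid_is_matroid.
apply/forallP => A; apply/eqP.
under [RHS]eq_bigr => j _ do rewrite ffunE mrank_colour_matroid.
by rewrite /hyper_rank (partition_big (fun i => c i) predT).
Qed.

End ColourMatroid.

Lemma odflt_pick_in (T : finType) (x0 : T) (S : {set T}) : S != set0 -> odflt x0 [pick x in S] \in S.
Proof. by case/set0Pn => x xS; case: pickP => [//|/(_ x)]; rewrite xS. Qed.

Lemma exists_subsetD1_card (T : finType) (S : {set T}) x m : m < #|S| -> x \in S ->
  exists2 S' : {set T}, S' \subset S :\ x & #|S'| = m.
Proof. by move=> ltS xS; apply: exists_subset_card; have := cardsD1 x S; rewrite xS; lia. Qed.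

Lemma pair_sub (T : finType) (x y : T) (S : {set T}) : x \in S -> y \in S -> [set x; y] \subset S.
Proof. by move=> xS yS; apply/subsetP => z; rewrite !inE => /orP [] /eqP ->. Qed.

Lemma card_set3_le (T : finType) (u v w : T) : #|[set u; v; w]| <= 3.
Proof. by rewrite setUC cardsU1 cards2; case: (w \notin _); case: (u != v). Qed.

Lemma exists_other (T : finType) (S : {set T}) e : 1 < #|S| -> exists2 f, f \in S & f != e.
Proof.
case/card_gt1P => x [y [xS yS xy]].
by have [xe|] := eqVneq x e; [exists y; rewrite // -xe eq_sym | exists x].
Qed.

Section LinearHypergraph.
Variables (E : finType) (n : nat) (X : 'I_n -> {set E}) (t : 'I_n -> nat).
Hypothesis t_gt0 : forall i, 0 < t i.
Hypothesis X_linear : forall i i', i != i' -> #|X i :&: X i'| <= 1.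
Implicit Types A B F G S : {set E}.

Lemma linear_eq i i' x y : x != y -> x \in X i -> y \in X i -> x \in X i' -> y \in X i' ->
  i = i'.
Proof.
move=> xy xi yi xi' yi'; apply/eqP/negP => /negP/X_linear; apply/negP; rewrite -ltnNge.
have sub : [set x; y] \subset X i :&: X i'.
  by apply/subsetP => z; rewrite !inE => /orP [] /eqP ->; apply/andP.
by apply: leq_trans (subset_leq_card sub); rewrite cards2 xy.
Qed.

Lemma cardI_le1 i h S : S \subset X i -> i != h -> #|S :&: X h| <= 1.
Proof. by move=> SX ih; apply: leq_trans (X_linear ih); rewrite subset_leq_card ?setSI. Qed.

Definition excess A := \sum_(i < n) (#|A :&: X i| - t i).

Lemma excess_sub A i : A \subset X i -> excess A = #|A| - t i.
Proof.
move=> AX; rewrite /excess (bigD1 i) //= (setIidPl AX) big1 ?addn0 // => h ih.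
by apply/eqP; rewrite subn_eq0 (leq_trans (cardI_le1 AX _)) // eq_sym.
Qed.

Lemma excess_small A i : A \subset X i -> #|A| <= t i -> excess A = 0.
Proof. by move=> AX At; rewrite (excess_sub AX); apply/eqP; rewrite subn_eq0. Qed.

Lemma excess_gt0 A : 0 < excess A -> exists h, t h < #|A :&: X h|.
Proof.
rewrite lt0n sum_nat_eq0 => /forallPn [h]; rewrite subn_eq0 -ltnNge.
by exists h.
Qed.

Definition bridges F G :=
  [set h | [&& t h == 1, F :&: X h != set0 & G :&: X h != set0]].

Lemma excess_le_bridges F G :
  (forall h, #|(F :|: G) :&: X h| <= t h \/ #|F :&: X h| <= 1 /\ #|G :&: X h| <= 1) ->
  excess (F :|: G) <= #|bridges F G|.
Proof.
move=> loc; rewrite /bridges -sum_nat_bool; apply: leq_sum => h _.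
have [le_t | [F1 G1]] := loc h; first by rewrite (_ : _ - _ = 0) //; lia.
have FG : #|(F :|: G) :&: X h| <= #|F :&: X h| + #|G :&: X h|.
  by rewrite setIUl leq_card_setU.
move: FG F1 G1 (t_gt0 h); rewrite -!card_gt0.
case: eqP => [->|] /=; case: (posnP #|F :&: X h|) => [->|];
  case: (posnP #|G :&: X h|) => [->|] /=; lia.
Qed.

Lemma lt_cardI_pair h u v A : t h = 1 -> u != v -> u \in A :&: X h -> v \in A :&: X h ->
  t h < #|A :&: X h|.
Proof.
move=> th1 uv uA vA; rewrite th1 (leq_trans _ (subset_leq_card (pair_sub uA vA))) //.
by rewrite cards2 uv.
Qed.

Lemma excess_ge3 A h1 h2 h3 : h1 != h2 -> h1 != h3 -> h2 != h3 ->
  t h1 < #|A :&: X h1| -> t h2 < #|A :&: X h2| -> t h3 < #|A :&: X h3| -> 3 <= excess A.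
Proof.
move=> h12 h13 h23 lt1 lt2 lt3; rewrite /excess (bigD1 h1) // (bigD1 h2) 1?eq_sym //=.
rewrite (bigD1 h3) /= ?(eq_sym h3) ?h13 ?h23 //.
by move: lt1 lt2 lt3; clear; lia.
Qed.

End LinearHypergraph.

Section Decomposition.
Variables (E : finType) (n : nat) (X : 'I_n -> {set E}) (t : 'I_n -> nat).
Hypothesis t_gt0 : forall i, 0 < t i.
Hypothesis X_linear : forall i i', i != i' -> #|X i :&: X i'| <= 1.
Variables (k : nat) (N : {ffun 'I_k -> {set {set E}}}).
Hypothesis N_Delta : N \in Delta k (hyper_rank X t).
Implicit Types A B F G S : {set E}.
Implicit Types j : 'I_k.

Local Notation excess := (excess X t).
Local Notation L j := (nonloops (N j)).
Local Notation nu j := (nullity (N j)).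

Lemma N_matroid j : is_matroid (N j).
Proof. by move: N_Delta; rewrite inE => /andP [/forallP]. Qed.

Lemma hyper_rank_sum A : hyper_rank X t A = \sum_j mrank (N j) A.
Proof. by move: N_Delta; rewrite inE => /andP [_ /forallP /(_ A) /eqP]. Qed.

Lemma card_nonloop_colours x : #|[set j | x \in L j]| = weight X x.
Proof.
rewrite -sum_nat_bool /weight -sum_nat_bool.
under eq_bigr => j _ do rewrite -mrank1 ?N_matroid //.
rewrite -hyper_rank_sum; apply: eq_bigr => i _.
by rewrite cards1I; case: (x \in X i); rewrite ?min0n //; apply/minn_idPl.
Qed.

Lemma nonloop_in_edge j x : x \in L j -> exists i, x \in X i.
Proof.
move=> xL; have : 0 < weight X x by rewrite -card_nonloop_colours; apply/card_gt0P; exists j; rewrite inE.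
by case/card_gt0P => i; rewrite inE; exists i.
Qed.

Lemma sum_nullity A : \sum_j nu j A = excess A.
Proof.
have cardL : \sum_j #|A :&: L j| = \sum_i #|A :&: X i|.
  transitivity (\sum_(x in A) weight X x); last first.
    rewrite /weight; under eq_bigr => x _ do rewrite -sum_nat_bool.
    rewrite exchange_big; apply: eq_bigr => i _; rewrite -sum1_card [RHS]big_mkcond /=.
    by rewrite big_mkcond; apply: eq_bigr => x _; rewrite inE; case: (x \in A); case: (x \in X i).
  under [RHS]eq_bigr => x _ do rewrite -card_nonloop_colours -sum_nat_bool.
  rewrite exchange_big; apply: eq_bigr => j _; rewrite -sum1_card [RHS]big_mkcond /=.
  by rewrite big_mkcond; apply: eq_bigr => x _; rewrite inE; case: (x \in A); case: (x \in L j).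
rewrite /nullity sumnB => [|j _]; last exact: mrank_le_nonloops (N_matroid j) A.
rewrite cardL -hyper_rank_sum /excess /hyper_rank -sumnB => [|i _]; last exact: geq_minl.
by apply: eq_bigr => i _; lia.
Qed.

Lemma sum_nullity_uniq (s : seq 'I_k) A : uniq s -> \sum_(j <- s) nu j A <= excess A.
Proof.
by move=> s_uniq; rewrite big_uniq // -sum_nullity [leqRHS](bigID (mem s)) leq_addr.
Qed.

Lemma nullity_le_excess j A : nu j A <= excess A.
Proof. by have := sum_nullity_uniq A (erefl : uniq [:: j]); rewrite big_seq1. Qed.

Lemma nullity_lt_excess j A : nu j A < excess A -> exists2 j', j' != j & 0 < nu j' A.
Proof.
rewrite -sum_nullity (bigD1 j) //= -{1}[nu j A]addn0 ltn_add2l lt0n sum_nat_eq0.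
by case/forallPn => j'; rewrite negb_imply => /andP [? ?]; exists j'; rewrite // lt0n.
Qed.

Lemma excess0_indep j A : A \subset L j -> excess A = 0 -> A \in N j.
Proof.
move=> AL A0; apply: (nullity0_indep (N_matroid j) AL).
by apply/eqP; rewrite -leqn0 -A0 nullity_le_excess.
Qed.

Lemma pair_indep j i x y : x \in X i -> y \in X i -> 2 <= t i ->
  x \in L j -> y \in L j -> [set x; y] \in N j.
Proof.
move=> xi yi ti xL yL; apply: excess0_indep; first exact: pair_sub.
by apply: (excess_small t_gt0 X_linear (pair_sub xi yi)); rewrite cards2 (leq_trans _ ti) //; case: (x != y).
Qed.

Lemma dependent_pair_edge j x y : x != y -> x \in L j -> y \in L j -> [set x; y] \notin N j ->
  exists i, [/\ t i = 1, x \in X i & y \in X i].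
Proof.
move=> xy xL yL xy_dep.
have [i lt_i] : exists i, t i < #|[set x; y] :&: X i|.
  apply: excess_gt0; exact: leq_trans (nullity_gt0 (N_matroid j) (pair_sub xL yL) xy_dep) (nullity_le_excess j _).
have := subset_leq_card (subsetIl [set x; y] (X i)); rewrite cards2 xy => le2.
have full : [set x; y] :&: X i = [set x; y].
  by apply/eqP; rewrite eqEcard subsetIl cards2 xy /=; have := t_gt0 i; lia.
have /subsetP xyX : [set x; y] \subset X i by rewrite -full subsetIr.
exists i; split; last by apply: xyX; rewrite !inE eqxx ?orbT.
  by move: lt_i; rewrite full cards2 xy; have := t_gt0 i; lia.
by apply: xyX; rewrite !inE eqxx.
Qed.


Lemma exists_pos_nullity A : 0 < excess A -> exists j, 0 < nu j A.
Proof.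
by rewrite -sum_nullity lt0n sum_nat_eq0 => /forallPn [j]; rewrite -lt0n; exists j.
Qed.

Lemma nullity_merge i j S x y : S \subset X i -> (t i).+1 < #|S| ->
  x \in S -> y \in S -> x != y ->
  #|S| - 1 - t i <= nu j (S :\ x) -> #|S| - 1 - t i <= nu j (S :\ y) ->
  #|S| - t i <= nu j S.
Proof.
move=> SX ltS xS yS xy nux nuy.
have := nullity_supermod (N_matroid j) (S :\ x) (S :\ y).
have -> : (S :\ x) :|: (S :\ y) = S.
  apply/setP => z; rewrite !inE -andb_orl; case: (z =P x) => [->|//].
  by rewrite xy.
have Sxy : (S :\ x) :&: (S :\ y) \subset X i by rewrite subIset // subDset subsetU ?SX ?orbT.
have := nullity_le_excess j ((S :\ x) :&: (S :\ y)); rewrite (excess_sub t_gt0 X_linear Sxy).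
have : #|(S :\ x) :&: (S :\ y)| = #|S| - 2.
  have -> : (S :\ x) :&: (S :\ y) = S :\ x :\ y.
    by apply/setP => z; rewrite !inE; case: (z == x); case: (z == y); case: (z \in S).
  have := cardsD1 y (S :\ x); have := cardsD1 x S; rewrite in_setD1 eq_sym xy xS yS /=.
  lia.
lia.
Qed.

Lemma excess_concentrates i S : S \subset X i -> t i < #|S| ->
  exists j, #|S| - t i <= nu j S.
Proof.
elim: {S}_.+1 {-2}S (ltnSn #|S|) => // m IHm S ltSm SX ltS.
have [eqS | ltS2] := eqVneq #|S| (t i).+1.
  have [|j] := @exists_pos_nullity S; last by exists j; lia.
  by rewrite (excess_sub t_gt0 X_linear SX) eqS subSnn.
have {ltS2} ltS : (t i).+1 < #|S| by rewrite ltn_neqAle eq_sym ltS2.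
have cardD1 x : x \in S -> #|S :\ x| = #|S| - 1 by move=> xS; rewrite (cardsD1 x S) xS; lia.
have IHD x : x \in S -> exists j, #|S| - 1 - t i <= nu j (S :\ x).
  move=> xS; have := IHm (S :\ x); rewrite cardD1 //; apply; first by lia.
    exact: subset_trans (subsetDl _ _) SX.
  by lia.
have /card_gt2P [a [b [c [[aS bS cS] [ab bc ca]]]]] : 2 < #|S| by have := t_gt0 i; lia.
have [ja nua] := IHD a aS; have [jb nub] := IHD b bS; have [jc nuc] := IHD c cS.
have [eab|jab] := eqVneq ja jb.
  by exists ja; apply: (nullity_merge SX ltS aS bS ab nua); rewrite eab.
have [ebc|jbc] := eqVneq jb jc.
  by exists jb; apply: (nullity_merge SX ltS bS cS bc nub); rewrite ebc.
have [eca|jca] := eqVneq jc ja.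
  by exists jc; apply: (nullity_merge SX ltS cS aS ca nuc); rewrite eca.
have uniq3 : uniq [:: ja; jb; jc] by rewrite /= !inE negb_or jab jbc eq_sym jca.
have := sum_nullity_uniq S uniq3; rewrite !big_cons big_nil (excess_sub t_gt0 X_linear SX).
have := nullityS (N_matroid ja) (subsetDl S [set a]).
have := nullityS (N_matroid jb) (subsetDl S [set b]).
have := nullityS (N_matroid jc) (subsetDl S [set c]).
move: ltS nua nub nuc; clear; lia.
Qed.

Definition fits j i := (X i \subset L j) && (mrank (N j) (X i) <= t i).

Lemma fits_nonloop j i x : fits j i -> x \in X i -> x \in L j.
Proof. by case/andP => /subsetP XL _ /XL. Qed.

Lemma fits_mrank j i S : fits j i -> S \subset X i -> mrank (N j) S <= t i.
Proof. by case/andP => _ rX SX; apply: leq_trans (mrankS (N_matroid j) SX) rX. Qed.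

Lemma fits_pair_dep j i x y : fits j i -> t i = 1 -> x \in X i -> y \in X i -> x != y ->
  [set x; y] \notin N j.
Proof.
move=> fit ti1 xi yi xy; rewrite indep_mrankE ?N_matroid // cards2 xy.
by have := fits_mrank fit (pair_sub xi yi); rewrite ti1; case: eqP => // ->.
Qed.

Lemma fits_exists i : t i < #|X i| -> exists j, fits j i.
Proof.
move=> ltX; have [j nuj] := excess_concentrates (subxx (X i)) ltX; exists j.
set a := #|X i :&: L j|.
have [S SXL cardS] := exists_subset_card (geq_minl a (t i)).
have SX : S \subset X i by apply: subset_trans SXL (subsetIl _ _).
have IS : S \in N j.
  apply: excess0_indep; first exact: subset_trans SXL (subsetIr _ _).
  by apply: (excess_small t_gt0 X_linear SX); rewrite cardS geq_minr.
have rX : minn a (t i) <= mrank (N j) (X i) by rewrite -cardS mrank_ge ?N_matroid.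
have aX : a <= #|X i| by rewrite subset_leq_card ?subsetIl.
move: nuj; rewrite /nullity -/a => nuj.
have eq_a : a = #|X i| by lia.
apply/andP; split; last by lia.
by apply/setIidPl/eqP; rewrite eqEcard subsetIl -/a eq_a leqnn.
Qed.

Lemma fits_unique i j j' : t i < #|X i| -> fits j i -> fits j' i -> j = j'.
Proof.
move=> ltX fit fit'; apply/eqP; apply: contraT => jj'.
have := sum_nullity_uniq (X i) (_ : uniq [:: j; j']); rewrite /= inE jj' !big_cons big_nil.
move: fit fit' => /andP [XL rX] /andP [XL' rX'].
rewrite !nullity_nonloops ?N_matroid // (excess_sub t_gt0 X_linear (subxx _)) => /(_ isT).
lia.
Qed.

Hypothesis k_gt0 : 0 < k.

Definition fit_colour i := odflt (Ordinal k_gt0) [pick j | fits j i].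

Lemma fit_colourP i : t i < #|X i| -> fits (fit_colour i) i.
Proof.
move=> ltX; rewrite /fit_colour; case: pickP => [//|nofit].
by have [j] := fits_exists ltX; rewrite nofit.
Qed.

Lemma fit_colour_eq i j : t i < #|X i| -> fits j i -> fit_colour i = j.
Proof. by move=> ltX; apply: fits_unique ltX (fit_colourP ltX). Qed.

Section Bridges.
Variables (j : 'I_k) (i : 'I_n) (F G : {set E}).
Hypotheses (FX : F \subset X i) (Ft : #|F| <= t i) (FG : [disjoint F & G]).
Hypothesis FGL : F :|: G \subset L j.

Lemma disjoint_neq u y : u \in F -> y \in G -> u != y.
Proof. by move=> uF; apply: contraTneq => <-; rewrite (disjointFr FG uF). Qed.

Lemma bridge_nontrivial h : h \in bridges X t F G -> t h < #|X h|.
Proof.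
rewrite inE => /and3P [/eqP th1 /set0Pn [u /setIP [uF uh]] /set0Pn [y /setIP [yG yh]]].
by rewrite th1 (leq_trans _ (subset_leq_card (pair_sub uh yh))) // cards2 disjoint_neq.
Qed.

Lemma card_bridges_colour j' : j' != j ->
  #|[set h in bridges X t F G | fit_colour h == j']| <= nu j' (F :|: G).
Proof.
move=> j'j; set B := [set h in _ | _].
have [->|[h0 h0B]] := set_0Vmem B; first by rewrite cards0.
have [x0 _] : exists x0 : E, true.
  by move: h0B; rewrite !inE => /andP [/and3P [_ /set0Pn [x _] _] _]; exists x.
pose pa h := odflt x0 [pick u in F :&: X h].
pose fr h := odflt x0 [pick y in G :&: X h].
have Bfacts h : h \in B ->
    [/\ fits j' h, t h = 1, pa h \in F :&: X h & fr h \in G :&: X h].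
  rewrite inE => /andP [hb /eqP <-]; have /fit_colourP fit := bridge_nontrivial hb.
  by move: hb; rewrite inE => /and3P [/eqP th1 /(odflt_pick_in x0) ? /(odflt_pick_in x0) ?].
have par h : h \in B -> [set pa h; fr h] \notin N j'.
  case/Bfacts => fit th1 /setIP [paF pah] /setIP [frG frh].
  exact: fits_pair_dep fit th1 pah frh (disjoint_neq paF frG).
have fr_inj : {in B &, injective fr}.
  move=> h h' hB h'B frE.
  have [fit th1 /setIP [paF pah] /setIP [frG frh]] := Bfacts h hB.
  have [fit' th1' /setIP [paF' pah'] /setIP [frG' frh']] := Bfacts h' h'B.
  have pa_eq : pa h = pa h'.
    apply/eqP; apply: contraT => neq.
    have : [set pa h; pa h'] \notin N j'.
      have := parallel_trans (N_matroid j') (fits_nonloop fit frh) (par h hB).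
      by apply; rewrite // frE setUC par.
    rewrite (pair_indep (subsetP FX _ paF) (subsetP FX _ paF')) ?(fits_nonloop fit pah) //.
      by rewrite (leq_trans _ Ft) // (leq_trans _ (subset_leq_card (pair_sub paF paF'))) ?cards2 ?neq.
    exact: fits_nonloop fit' pah'.
  by apply: linear_eq (disjoint_neq paF frG) pah frh _ _; rewrite ?pa_eq ?frE.
rewrite -(card_in_imset fr_inj); apply: (nullity_ge_parallels (N_matroid j')).
  apply/subsetP => _ /imsetP [h hB ->]; have [_ _ _ /setIP [frG _]] := Bfacts h hB.
  by rewrite inE frG orbT.
move=> _ /imsetP [h hB ->]; have [fit th1 /setIP [paF pah] /setIP [frG frh]] := Bfacts h hB.
split; first exact: fits_nonloop fit frh.
exists (pa h); last by rewrite (fits_nonloop fit pah) par.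
rewrite !inE paF andbT; apply/imsetP => [[h' h'B paE]].
by have [_ _ _ /setIP [frG' _]] := Bfacts h' h'B; move: (disjoint_neq paF frG'); rewrite paE eqxx.
Qed.


Hypothesis loc : forall h,
  #|(F :|: G) :&: X h| <= t h \/ #|F :&: X h| <= 1 /\ #|G :&: X h| <= 1.
Hypothesis nofit : forall h, h \in bridges X t F G -> ~~ fits j h.

Lemma bridged_union_indep : F :|: G \in N j.
Proof.
apply: (nullity0_indep (N_matroid j) FGL); apply/eqP; rewrite -leqn0.
suff: nu j (F :|: G) + #|bridges X t F G| <= excess (F :|: G).
  by have := excess_le_bridges t_gt0 loc; lia.
rewrite -sum_nullity (bigD1 j) //= leq_add2l.
rewrite -sum1_card (partition_big fit_colour predT) //= (bigD1 j) //= big1 => [|h].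
  by rewrite add0n; apply: leq_sum => j' j'j; rewrite sum1dep_card card_bridges_colour.
by case/andP => hb /eqP hj; move: (nofit hb); rewrite -hj fit_colourP ?bridge_nontrivial.
Qed.
End Bridges.

Lemma fits_cross_pair_indep j i f g : fits j i -> 2 <= t i -> t i < #|X i| ->
  f \in L j -> f \notin X i -> g \in X i -> [set f; g] \in N j.
Proof.
move=> fit t2 ltX fL fX gX; apply: contraT => fg_dep.
have [i0 fi0] := nonloop_in_edge fL.
have [B BXg cardB] := exists_subsetD1_card ltX gX.
have BX : B \subset X i by apply: subset_trans BXg (subsetDl _ _).
have gB : g \notin B by apply/negP => /(subsetP BXg); rewrite !inE eqxx.
have fB : f \notin B by apply: contra fX; apply: (subsetP BX).
have BL : B \subset L j by apply/subsetP => b /(subsetP BX); apply: fits_nonloop fit.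
have : f |: B \in N j.
  apply: (bridged_union_indep (i := i0)); rewrite ?sub1set ?cards1 ?t_gt0 ?disjoints1 //.
  - by rewrite subUset sub1set fL.
  - move=> h; have [->|ih] := eqVneq h i.
      have f0 : [set f] :&: X i = set0 by apply/eqP; rewrite -cards_eq0 cards1I (negbTE fX).
      by left; rewrite setIUl f0 set0U (setIidPl BX) cardB.
    by right; rewrite cards1I leq_b1 (cardI_le1 X_linear BX) // eq_sym.
  - move=> h; rewrite inE => /and3P [/eqP th1 /set0Pn [_ /setIP [/set1P -> fh]]].
    case/set0Pn => b /setIP [bB bh]; apply/negP => fit_h.
    have gb : g != b by apply: contraNneq gB => ->.
    have := pair_indep gX (subsetP BX b bB) t2 (fits_nonloop fit gX) (subsetP BL b bB).
    apply/negP; apply: (parallel_trans (N_matroid j) fL) gb; first by rewrite setUC.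
    by apply: fits_pair_dep fit_h th1 fh bh _; apply: contraNneq fB => ->.
rewrite indep_mrankE ?N_matroid // cardsU1 fB cardB.
have : mrank (N j) (f |: (g |: B)) <= mrank (N j) (g |: B).
  by apply: (mrank_add_parallel (N_matroid j) (p := g)); rewrite ?setU11 ?(fits_nonloop fit) // setUC.
have : mrank (N j) (g |: B) <= t i by apply: fits_mrank fit _; rewrite subUset sub1set gX.
have : mrank (N j) (f |: B) <= mrank (N j) (f |: (g |: B)).
  by apply: (mrankS (N_matroid j)); rewrite setUS // subsetUr.
by move=> + + + /eqP; clear; lia.
Qed.

Lemma fits_shared_ge2 j i i' e : i != i' -> e \in X i -> e \in X i' ->
  fits j i -> fits j i' -> 2 <= t i -> 2 <= t i' -> t i < #|X i| -> t i' < #|X i'| -> False.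
Proof.
move=> ii' ei ei' fit fit' t2 t2' ltX ltX'.
have common x : x \in X i -> x \in X i' -> x = e.
  move=> xi xi'; apply/eqP; apply: contraT => xe.
  by move: ii'; rewrite (linear_eq X_linear xe xi ei xi' ei') eqxx.
have [F FXe cardF] := exists_subsetD1_card ltX ei.
have [G GXe cardG] := exists_subsetD1_card ltX' ei'.
have FX : F \subset X i by apply: subset_trans FXe (subsetDl _ _).
have GX : G \subset X i' by apply: subset_trans GXe (subsetDl _ _).
have F0 : F :&: X i' = set0.
  apply/setP => x; rewrite !inE; apply/negP => /andP [xF xi'].
  by move: (subsetP FXe x xF); rewrite !inE (common x (subsetP FX x xF) xi') eqxx.
have G0 : G :&: X i = set0.
  apply/setP => x; rewrite !inE; apply/negP => /andP [xG xi].
  by move: (subsetP GXe x xG); rewrite !inE (common x xi (subsetP GX x xG)) eqxx.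
have FL : F \subset L j by apply/subsetP => x /(subsetP FX); apply: fits_nonloop fit.
have GL : G \subset L j by apply/subsetP => x /(subsetP GX); apply: fits_nonloop fit'.
have indep : F :|: G \in N j.
  apply: (bridged_union_indep FX); rewrite ?cardF ?subUset ?FL ?GL //.
  - by rewrite -setI_eq0 -subset0 -F0 setIS.
  - move=> h; have [->|hi] := eqVneq h i.
      by left; rewrite setIUl G0 setU0 (setIidPl FX) cardF.
    have [->|hi'] := eqVneq h i'.
      by left; rewrite setIUl F0 set0U (setIidPl GX) cardG.
    by right; split; [apply: (cardI_le1 X_linear FX) | apply: (cardI_le1 X_linear GX)];
      rewrite eq_sym.
  - move=> h; rewrite inE => /and3P [/eqP th1 /set0Pn [u /setIP [uF uh]] /set0Pn [y /setIP [yG yh]]].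
    apply/negP => fit_h; have uX' : u \notin X i'.
      by apply/negP => ui'; move/setP/(_ u): F0; rewrite !inE uF ui'.
    have uy : u != y by apply: contraNneq uX' => ->; apply: (subsetP GX).
    have := fits_cross_pair_indep fit' t2' ltX' (subsetP FL u uF) uX' (subsetP GX y yG).
    by rewrite (negbTE (fits_pair_dep fit_h th1 uh yh uy)).
have eF : e |: F \subset X i by rewrite subUset sub1set ei FX.
have eG : e |: G \subset X i' by rewrite subUset sub1set ei' GX.
have sub := mrank_submod (N_matroid j) (e |: F) (e |: G).
have eFG : (e |: F) :&: (e |: G) = [set e].
  apply/setP => x; rewrite !inE; case: (x =P e) => //= _; apply/negP => /andP [xF xG].
  by move/setP/(_ x): F0; rewrite !inE xF (subsetP GX x xG).
rewrite eFG mrank1 ?N_matroid // (fits_nonloop fit ei) in sub.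
have mon : mrank (N j) (F :|: G) <= mrank (N j) ((e |: F) :|: (e |: G)).
  by apply: (mrankS (N_matroid j)); apply: setUSS; apply: subsetUr.
have FG0 : F :&: G = set0.
  apply/setP => x; rewrite !inE; apply/negP => /andP [xF xG].
  by move/setP/(_ x): F0; rewrite !inE xF (subsetP GX x xG).
rewrite (mrank_indep (N_matroid j) indep) cardsU FG0 cards0 cardF cardG in mon.
have rF := fits_mrank fit eF; have rG := fits_mrank fit' eG.
by move: sub mon rF rG; clear; lia.
Qed.

Lemma pair_nullity_other j j' h u v : j' != j -> u != v -> u \in X h -> v \in X h -> t h = 1 ->
  u \in L j -> v \in L j -> [set u; v] \notin N j -> nu j' [set u; v] = 0.
Proof.
move=> j'j uv uh vh th1 uL vL uv_dep.
have := sum_nullity_uniq [set u; v] (_ : uniq [:: j; j']); rewrite /= inE eq_sym j'j.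
rewrite !big_cons big_nil (excess_sub t_gt0 X_linear (pair_sub uh vh)) cards2 uv th1 => /(_ isT).
have := nullity_gt0 (N_matroid j) (pair_sub uL vL) uv_dep.
by move: (nu j _) (nu j' _) => m m'; clear; lia.
Qed.

Section Triangle.
Variables (j : 'I_k) (a b c d : 'I_n) (p q r x : E).
Hypotheses (pa : p \in X a) (pb : p \in X b) (qa : q \in X a) (qc : q \in X c).
Hypotheses (rb : r \in X b) (rc : r \in X c) (xa : x \in X a) (xd : x \in X d) (rd : r \in X d).
Hypotheses (pq : p != q) (pr : p != r) (qr : q != r) (xp : x != p) (xq : x != q).
Hypotheses (ta : t a = 1) (tb : t b = 1) (tc : t c = 1) (td : t d = 1).
Hypotheses (fa : fits j a) (fb : fits j b) (fc : fits j c).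

Hypotheses (ab : a != b) (ac : a != c) (bc : b != c).

Let not_both i i' y z : i != i' -> y != z -> y \in X i -> z \in X i -> y \in X i' -> z \notin X i'.
Proof. by move=> ii' yz yi zi yi'; apply/negP => zi'; move: ii'; rewrite (linear_eq X_linear yz yi zi yi' zi') eqxx. Qed.

Let ra : r \notin X a. Proof. by apply: (not_both _ pr pb rb pa); rewrite eq_sym. Qed.
Let xb : x \notin X b. Proof. by apply: (not_both ab _ pa xa pb); rewrite eq_sym. Qed.
Let xc : x \notin X c. Proof. by apply: (not_both ac _ qa xa qc); rewrite eq_sym. Qed.
Let pd : p \notin X d. Proof. by apply: (not_both _ xp xa pa xd); apply: contraNneq ra => ->. Qed.
Let qd : q \notin X d. Proof. by apply: (not_both _ xq xa qa xd); apply: contraNneq ra => ->. Qed.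
Let xr : x != r. Proof. by apply: contraNneq ra => <-. Qed.
Let ad : a != d. Proof. by apply: contraNneq ra => ->. Qed.
Let bd : b != d. Proof. by apply: contraNneq xb => ->. Qed.
Let cd : c != d. Proof. by apply: contraNneq xc => ->. Qed.

Let pL : p \in L j. Proof. exact: fits_nonloop fa pa. Qed.
Let qL : q \in L j. Proof. exact: fits_nonloop fa qa. Qed.
Let xL : x \in L j. Proof. exact: fits_nonloop fa xa. Qed.
Let rL : r \in L j. Proof. exact: fits_nonloop fb rb. Qed.
Let pr_dep : [set p; r] \notin N j. Proof. exact: fits_pair_dep fb tb pb rb pr. Qed.
Let qr_dep : [set q; r] \notin N j. Proof. exact: fits_pair_dep fc tc qc rc qr. Qed.
Let rx_dep : [set r; x] \notin N j.
Proof.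
rewrite setUC; apply: (parallel_trans (N_matroid j) pL) xr => //.
exact: fits_pair_dep fa ta xa pa xp.
Qed.

Let P3 := [set p; q; x].
Let B := r |: P3.

Let P3a : P3 \subset X a.
Proof. by apply/subsetP => y; rewrite !inE => /orP [/orP [] | ] /eqP ->. Qed.

Let cardP3 : #|P3| = 3.
Proof. by rewrite /P3 setUC cardsU1 cards2 pq !inE negb_or xp xq. Qed.

Let BL : B \subset L j.
Proof. by rewrite subUset sub1set rL; apply/subsetP => y /(subsetP P3a); apply: fits_nonloop fa. Qed.

Let nullity_P3 : 2 <= nu j P3.
Proof.
rewrite nullity_nonloops ?N_matroid ?(subset_trans (subsetUr _ _) BL) // cardP3.
by have := fits_mrank fa P3a; rewrite ta; move: (mrank _ _); clear; lia.
Qed.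

Let nullity_B : 3 <= nu j B.
Proof.
have rP3 : r \notin P3.
  by rewrite !inE; apply/negP => /orP [/orP [] | ] /eqP rE; [move: pr | move: qr | move: xr];
    rewrite rE eqxx.
rewrite nullity_nonloops ?N_matroid // /B cardsU1 cardP3 rP3.
have := fits_mrank fa P3a; rewrite ta.
have : mrank (N j) (r |: P3) <= mrank (N j) P3.
  by apply: (mrank_add_parallel (N_matroid j) (p := p)); rewrite // !inE eqxx.
by move: (mrank _ (r |: P3)) (mrank _ P3); clear; lia.
Qed.

Let nullity_other j' : j' != j -> nu j' B <= 1.
Proof.
move=> j'j.
have P30 : nu j' P3 = 0.
  have := sum_nullity_uniq P3 (_ : uniq [:: j; j']); rewrite /= inE eq_sym j'j.
  rewrite !big_cons big_nil (excess_sub t_gt0 X_linear P3a) cardP3 ta => /(_ isT).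
  by move: nullity_P3; clear; lia.
have := nullityD1 (N_matroid j') B r.
have : nu j' (B :\ r) <= nu j' P3.
  by apply: (nullityS (N_matroid j')); apply/subsetP => y; rewrite !inE => /andP [/negbTE ->].
by rewrite P30; clear; lia.
Qed.

Let excess_B : excess B <= 5.
Proof.
have cardBh h : #|B :&: X h| <= (r \in X h) + #|P3 :&: X h|.
  by rewrite setIUl -cards1I leq_card_setU.
have P3h h : a != h -> #|P3 :&: X h| <= 1 by apply: (cardI_le1 X_linear P3a).
have Ba : #|B :&: X a| - t a <= 2.
  by have := cardBh a; rewrite (negbTE ra) (setIidPl P3a) cardP3 ta; move: (#|_|); clear; lia.
have Bh h : a != h -> r \in X h -> #|B :&: X h| - t h <= 1.
  move=> ha rh; have := cardBh h; have := P3h h ha; rewrite rh; have := t_gt0 h.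
  by move: (t h) (#|_ :&: _|) (#|_ :&: _|); clear; lia.
rewrite /excess (bigD1 a) //= (bigD1 b) /=; last by rewrite eq_sym.
rewrite (bigD1 c) /=; last by rewrite eq_sym ac eq_sym bc.
rewrite (bigD1 d) /=; last by rewrite (eq_sym d a) (eq_sym d b) (eq_sym d c) ad bd cd.
rewrite big1 => [|h /andP [/andP [/andP [ha hb] hc] hd]].
  have := Bh b ab rb; have := Bh c ac rc; have := Bh d ad rd.
  by move: Ba (#|_ :&: _| - _) (#|_ :&: _| - _) (#|_ :&: _| - _); clear; lia.
apply/eqP; rewrite subn_eq0; have := cardBh h.
have [rh|rNh] := boolP (r \in X h); last first.
  by rewrite add0n => /leq_trans; apply; rewrite (leq_trans (P3h h _)) ?t_gt0 // eq_sym.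
have -> : P3 :&: X h = set0.
  apply/setP => y; rewrite !inE; apply/negP => /andP [/orP [/orP [] | ] /eqP -> yh].
  - by move: hb; rewrite (linear_eq X_linear pr pb rb yh rh) eqxx.
  - by move: hc; rewrite (linear_eq X_linear qr qc rc yh rh) eqxx.
  - by move: hd; rewrite (linear_eq X_linear xr xd rd yh rh) eqxx.
by rewrite cards0 => /leq_trans; apply; apply: t_gt0.
Qed.

Let triple_colour (T : {set E}) : T \subset B -> r \in T -> #|T| <= 3 -> 3 <= excess T ->
  exists2 j', j' != j & 0 < nu j' T.
Proof.
move=> TB rT T3 ex3; apply: nullity_lt_excess; apply: leq_trans ex3.
rewrite nullity_nonloops ?N_matroid ?(subset_trans TB BL) //.
have : 1 <= mrank (N j) T.
  by rewrite (leq_trans _ (mrankS (N_matroid j) (_ : [set r] \subset T))) ?mrank1 ?N_matroid ?rL ?sub1set.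
by move: T3 (mrank _ _); clear; lia.
Qed.

Let merge j' (Ta Tb P : {set E}) : j' != j -> 0 < nu j' Ta -> 0 < nu j' Tb ->
  Ta :|: Tb \subset B -> Ta :&: Tb \subset P -> nu j' P = 0 -> False.
Proof.
move=> j'j na nb TabB TabP P0.
have := nullity_supermod (N_matroid j') Ta Tb.
have := nullityS (N_matroid j') TabB; have := nullityS (N_matroid j') TabP.
have := nullity_other j'j; rewrite P0.
move: na nb; move: (nu j' Ta) (nu j' Tb) (nu j' (Ta :|: Tb)) (nu j' (Ta :&: Tb)) (nu j' B).
by clear; lia.
Qed.

Lemma fitting_triangle_tail : False.
Proof.
have TB (u v w : E) : u \in B -> v \in B -> w \in B -> [set u; v; w] \subset B.
  by move=> uB vB wB; rewrite !subUset !sub1set uB vB wB.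
have inB : [/\ p \in B, q \in B, r \in B & x \in B] by rewrite !inE !eqxx ?orbT.
case: inB => pB qB rB xB.
have in3 (u v w : E) : [/\ u \in [set u; v; w], v \in [set u; v; w] & w \in [set u; v; w]].
  by rewrite !inE !eqxx ?orbT.
have [j1 j1j n1] : exists2 j', j' != j & 0 < nu j' [set p; r; x].
  case: (in3 p r x) => *; apply: triple_colour; rewrite ?TB ?card_set3_le //.
  apply: (excess_ge3 ab ad bd).
  - by apply: (lt_cardI_pair (u := x) (v := p)); rewrite ?inE ?eqxx ?orbT.
  - by apply: (lt_cardI_pair (u := p) (v := r)); rewrite ?inE ?eqxx ?orbT.
  - by apply: (lt_cardI_pair (u := x) (v := r)); rewrite ?inE ?eqxx ?orbT.
have [j2 j2j n2] : exists2 j', j' != j & 0 < nu j' [set q; r; x].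
  case: (in3 q r x) => *; apply: triple_colour; rewrite ?TB ?card_set3_le //.
  apply: (excess_ge3 ac ad cd).
  - by apply: (lt_cardI_pair (u := x) (v := q)); rewrite ?inE ?eqxx ?orbT.
  - by apply: (lt_cardI_pair (u := q) (v := r)); rewrite ?inE ?eqxx ?orbT.
  - by apply: (lt_cardI_pair (u := x) (v := r)); rewrite ?inE ?eqxx ?orbT.
have [j3 j3j n3] : exists2 j', j' != j & 0 < nu j' [set p; q; r].
  case: (in3 p q r) => *; apply: triple_colour; rewrite ?TB ?card_set3_le //.
  apply: (excess_ge3 ab ac bc).
  - by apply: (lt_cardI_pair (u := p) (v := q)); rewrite ?inE ?eqxx ?orbT.
  - by apply: (lt_cardI_pair (u := p) (v := r)); rewrite ?inE ?eqxx ?orbT.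
  - by apply: (lt_cardI_pair (u := q) (v := r)); rewrite ?inE ?eqxx ?orbT.
have [e12|j12] := eqVneq j1 j2.
  apply: (merge (Ta := [set p; r; x]) (Tb := [set q; r; x]) (P := [set r; x]) j1j n1).
  - by rewrite e12.
  - by rewrite subUset !TB.
  - apply/subsetP => y; rewrite !inE => /andP [/orP [/orP [] | ] /eqP ->]; rewrite ?eqxx ?orbT //.
    by rewrite (negbTE pq) (negbTE pr) eq_sym (negbTE xp).
  - have rx : r != x by rewrite eq_sym.
    exact: pair_nullity_other j1j rx rd xd td rL xL rx_dep.
have [e13|j13] := eqVneq j1 j3.
  apply: (merge (Ta := [set p; r; x]) (Tb := [set p; q; r]) (P := [set p; r]) j1j n1).
  - by rewrite e13.
  - by rewrite subUset !TB.
  - apply/subsetP => y; rewrite !inE => /andP [/orP [/orP [] | ] /eqP ->]; rewrite ?eqxx ?orbT //.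
    by rewrite (negbTE xp) (negbTE xq) (negbTE xr).
  - exact: pair_nullity_other j1j pr pb rb tb pL rL pr_dep.
have [e23|j23] := eqVneq j2 j3.
  apply: (merge (Ta := [set q; r; x]) (Tb := [set p; q; r]) (P := [set q; r]) j2j n2).
  - by rewrite e23.
  - by rewrite subUset !TB.
  - apply/subsetP => y; rewrite !inE => /andP [/orP [/orP [] | ] /eqP ->]; rewrite ?eqxx ?orbT //.
    by rewrite (negbTE xp) (negbTE xq) (negbTE xr).
  - exact: pair_nullity_other j2j qr qc rc tc qL rL qr_dep.
have uniq4 : uniq [:: j; j1; j2; j3].
  by rewrite /= !inE !negb_or j12 j13 j23 !(eq_sym j) j1j j2j j3j.
have := sum_nullity_uniq B uniq4; rewrite !big_cons big_nil.
have := nullityS (N_matroid j1) (TB _ _ _ pB rB xB).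
have := nullityS (N_matroid j2) (TB _ _ _ qB rB xB).
have := nullityS (N_matroid j3) (TB _ _ _ pB qB rB).
move: n1 n2 n3 nullity_B excess_B.
move: (nu j1 _) (nu j2 _) (nu j3 _) (nu j B) (nu j1 B) (nu j2 B) (nu j3 B) (excess B).
by clear; lia.
Qed.
End Triangle.

Lemma dependent_pair_fitting_edge j u v : u != v -> u \in L j -> v \in L j ->
  [set u; v] \notin N j -> exists h, [/\ t h = 1, u \in X h, v \in X h & fits j h].
Proof.
move=> uv uL vL uv_dep; have [h [th1 uh vh]] := dependent_pair_edge uv uL vL uv_dep.
exists h; split => //.
have ltX : t h < #|X h| by rewrite th1 (leq_trans _ (subset_leq_card (pair_sub uh vh))) ?cards2 ?uv.
have fit := fit_colourP ltX; have [<-//|hj] := eqVneq (fit_colour h) j.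
have := pair_nullity_other hj uv uh vh th1 uL vL uv_dep.
have := nullity_gt0 (N_matroid (fit_colour h)) (pair_sub (fits_nonloop fit uh) (fits_nonloop fit vh)).
by rewrite (fits_pair_dep fit th1 uh vh uv) => /(_ isT) /[swap] ->.
Qed.

Lemma fitting_triangle_pair j a b c p q r : a != b -> a != c -> b != c ->
  p != q -> p != r -> q != r ->
  p \in X a -> p \in X b -> q \in X a -> q \in X c -> r \in X b -> r \in X c ->
  t a = 1 -> t b = 1 -> t c = 1 -> fits j a -> fits j b -> fits j c ->
  X a \subset [set p; q].
Proof.
move=> ab ac bc pq pr qr pa pb qa qc rb rc ta tb tc fa fb fc.
apply/subsetP => x xa; rewrite !inE; apply: contraT; rewrite negb_or => /andP [xp xq].
have xr : x != r.
  by apply: contraNneq ab => erx; rewrite erx in xa; rewrite (linear_eq X_linear pr pa xa pb rb).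
have xL := fits_nonloop fa xa; have rL := fits_nonloop fb rb.
have xr_dep : [set x; r] \notin N j.
  apply: (parallel_trans (N_matroid j) (fits_nonloop fa pa)) xr.
    exact: fits_pair_dep fa ta xa pa xp.
  exact: fits_pair_dep fb tb pb rb pr.
have [d [td xd rd]] := dependent_pair_edge xr xL rL xr_dep.
by case: (fitting_triangle_tail pa pb qa qc rb rc xa xd rd pq pr qr xp xq ta tb tc td fa fb fc ab ac bc).
Qed.

Hypothesis t_lt : forall i, 1 < #|X i| -> t i < #|X i|.
Hypothesis no_triangle : ~ exists a b c : E, [/\ a != b, a != c, b != c &
  [/\ exists i, X i = [set a; b], exists i, X i = [set a; c] & exists i, X i = [set b; c]]].

Lemma no_shared_fit j i i' e : i != i' -> e \in X i -> e \in X i' ->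
  1 < #|X i| -> 1 < #|X i'| -> fits j i -> fits j i' -> False.
Proof.
move=> ii' ei ei' gt1 gt1' fit fit'.
have [f fi fe] := exists_other e gt1; have [g gi' ge] := exists_other e gt1'.
have fi' : f \notin X i'.
  by apply: contra ii' => fi'; rewrite (linear_eq X_linear fe fi ei fi' ei').
have gi : g \notin X i.
  by apply: contra ii' => gi; rewrite (linear_eq X_linear ge gi ei gi' ei').
have t2 h : t h != 1 -> 2 <= t h by have := t_gt0 h; case: (t h) => [|[|]].
have [ti1|/t2 ti2] := eqVneq (t i) 1; have [ti1'|/t2 ti2'] := eqVneq (t i') 1.
- have fg : f != g by apply: contraNneq fi' => ->.
  have eL := fits_nonloop fit ei.
  have fg_dep : [set f; g] \notin N j.
    apply: (parallel_trans (N_matroid j) eL) fg; first exact: fits_pair_dep fit ti1 fi ei fe.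
    by apply: fits_pair_dep fit' ti1' ei' gi' _; rewrite eq_sym.
  have [h [th1 fh gh fith]] :=
    dependent_pair_fitting_edge fg (fits_nonloop fit fi) (fits_nonloop fit' gi') fg_dep.
  have ih : i != h by apply: contraNneq gi => ->.
  have i'h : i' != h by apply: contraNneq fi' => ->.
  have [ef eg gf] : [/\ e != f, e != g & g != f] by split; rewrite eq_sym.
  have [i'i hi hi'] : [/\ i' != i, h != i & h != i'] by split; rewrite eq_sym.
  have Xi := fitting_triangle_pair ii' ih i'h ef eg fg ei ei' fi fh gi' gh ti1 ti1' th1 fit fit' fith.
  have Xi' := fitting_triangle_pair i'i i'h ih eg ef gf ei' ei gi' gh fi fh ti1' ti1 th1 fit' fit fith.
  have Xh := fitting_triangle_pair hi hi' ii' fg fe ge fh fi gh gi' ei ei' th1 ti1 ti1' fith fit fit'.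
  apply: no_triangle; exists e, f, g; split => //; split.
  - by exists i; apply/eqP; rewrite eqEsubset Xi pair_sub.
  - by exists i'; apply/eqP; rewrite eqEsubset Xi' pair_sub.
  - by exists h; apply/eqP; rewrite eqEsubset Xh pair_sub.
- have := fits_cross_pair_indep fit' ti2' (t_lt gt1') (fits_nonloop fit fi) fi' ei'.
  by rewrite (negbTE (fits_pair_dep fit ti1 fi ei fe)).
- have := fits_cross_pair_indep fit ti2 (t_lt gt1) (fits_nonloop fit' gi') gi ei.
  by rewrite (negbTE (fits_pair_dep fit' ti1' gi' ei' ge)).
- exact: fits_shared_ge2 ii' ei ei' fit fit' ti2 ti2' (t_lt gt1) (t_lt gt1').
Qed.

Lemma fit_colour_inj x h h' : x \in X h -> x \in X h' -> 1 < #|X h| -> 1 < #|X h'| ->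
  fit_colour h = fit_colour h' -> h = h'.
Proof.
move=> xh xh' gt1 gt1' eq_col; apply/eqP; apply: contraT => hh'.
have fit' : fits (fit_colour h) h' by rewrite eq_col; apply: fit_colourP (t_lt gt1').
by case: (no_shared_fit hh' xh xh' gt1 gt1' (fit_colourP (t_lt gt1)) fit').
Qed.

Hypothesis X_inj : injective X.
Hypothesis X_nonempty : forall i, X i != set0.

Lemma singleton_eq i x y : #|X i| <= 1 -> x \in X i -> y \in X i -> x = y.
Proof. by move=> /card_le1_eqP le1 xi yi; apply: le1. Qed.

Lemma singleton_uniq i i' x : #|X i| <= 1 -> #|X i'| <= 1 -> x \in X i -> x \in X i' -> i = i'.
Proof.
move=> le1 le1' xi xi'; apply: X_inj; apply/setP => y; apply/idP/idP => yX.
  by rewrite (singleton_eq le1 yX xi).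
by rewrite (singleton_eq le1' yX xi').
Qed.

Definition free_for i j := [exists x in X i, (x \in L j) &&
  [forall h, (x \in X h) && (1 < #|X h|) ==> (fit_colour h != j)]].

Lemma free_for_exists i : #|X i| <= 1 -> exists j, free_for i j.
Proof.
move=> le1; have /set0Pn [x xi] := X_nonempty i.
set NS := [set h | (x \in X h) && (1 < #|X h|)].
have inj : {in NS &, injective fit_colour}.
  by move=> h h'; rewrite !inE => /andP [xh gt1] /andP [xh' gt1']; apply: fit_colour_inj xh xh' gt1 gt1'.
have sub : fit_colour @: NS \subset [set j | x \in L j].
  apply/subsetP => j /imsetP [h]; rewrite /NS inE => /andP [xh gt1] ->.
  by rewrite inE (fits_nonloop (fit_colourP (t_lt gt1)) xh).
have lt : #|fit_colour @: NS| < #|[set j | x \in L j]|.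
  rewrite card_in_imset // card_nonloop_colours /weight.
  have -> : [set h | x \in X h] = i |: NS.
    apply/setP => h; rewrite !inE; case: (ltnP 1 #|X h|) => [|le1h]; rewrite ?andbT ?andbF ?orbF.
      by case: eqP => [->|]; rewrite ?xi.
    by apply/idP/eqP => [xh | ->//]; apply: singleton_uniq le1h le1 xh xi.
  have gt1F : (1 < #|X i|) = false by rewrite ltnNge le1.
  by rewrite cardsU1 /NS inE gt1F andbF.
have /subsetPn [j jx jNS] : ~~ ([set j | x \in L j] \subset fit_colour @: NS).
  by apply: contraTN lt => /subset_leq_card; rewrite leqNgt.
exists j; apply/existsP; exists x; rewrite xi /=; apply/andP; split; first by move: jx; rewrite inE.
apply/forallP => h; apply/implyP => hNS; apply: contraNneq jNS => <-.
by apply: imset_f; rewrite /NS inE.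
Qed.

Lemma free_forP i j x : #|X i| <= 1 -> x \in X i -> free_for i j ->
  x \in L j /\ forall h, x \in X h -> 1 < #|X h| -> fit_colour h != j.
Proof.
move=> le1 xi /existsP [y /and3P [yi yL /forallP free]]; rewrite (singleton_eq le1 xi yi).
by split=> // h yh gt1; move/implyP: (free h); apply; rewrite yh.
Qed.

Definition colour i :=
  if 1 < #|X i| then fit_colour i else odflt (Ordinal k_gt0) [pick j | free_for i j].

Lemma colour_fit i : 1 < #|X i| -> fits (colour i) i.
Proof. by move=> gt1; rewrite /colour gt1; apply: fit_colourP (t_lt gt1). Qed.

Lemma colour_free i : #|X i| <= 1 -> free_for i (colour i).
Proof.
move=> le1; rewrite /colour ltnNge le1 /=; case: pickP => [//|nofree].
by have [j] := free_for_exists le1; rewrite nofree.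
Qed.

Lemma colour_nonloop i x : x \in X i -> x \in L (colour i).
Proof.
move=> xi; case: (ltnP 1 #|X i|) => [gt1 | le1]; first exact: fits_nonloop (colour_fit gt1) xi.
by case: (free_forP le1 xi (colour_free le1)).
Qed.

Lemma colour_mrank i : mrank (N (colour i)) (X i) <= t i.
Proof.
case: (ltnP 1 #|X i|) => [gt1 | le1]; first exact: fits_mrank (colour_fit gt1) (subxx _).
by rewrite (leq_trans (mrank_le_card (N_matroid _) _)) // (leq_trans le1) ?t_gt0.
Qed.

Lemma colour_inj x i i' : x \in X i -> x \in X i' -> colour i = colour i' -> i = i'.
Proof.
move=> xi xi'; case: (ltnP 1 #|X i|) => [gt1 | le1]; case: (ltnP 1 #|X i'|) => [gt1' | le1'].
- by rewrite /colour gt1 gt1'; apply: fit_colour_inj xi xi' gt1 gt1'.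
- have [_ free] := free_forP le1' xi' (colour_free le1').
  by rewrite {1}/colour gt1 => /eqP; rewrite (negbTE (free i xi gt1)).
- have [_ free] := free_forP le1 xi (colour_free le1).
  by rewrite {2}/colour gt1' => /eqP; rewrite eq_sym (negbTE (free i' xi' gt1')).
- by move=> _; apply: singleton_uniq le1 le1' xi xi'.
Qed.

Definition colouring := [ffun i => colour i].

Lemma colouring_proper : proper_col X colouring.
Proof.
apply/forallP => i; apply/forallP => i'; apply/implyP => /andP [ii' /set0Pn [x /setIP [xi xi']]].
by rewrite !ffunE; apply: contra ii' => /eqP /(colour_inj xi xi') ->.
Qed.

Lemma colour_cover j x : x \in L j -> exists2 i, x \in X i & colour i = j.
Proof.
move=> xL; set H := [set i | x \in X i].
have inj : {in H &, injective colour} by move=> i i'; rewrite /H !inE; apply: colour_inj.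
have sub : colour @: H \subset [set j | x \in L j].
  by apply/subsetP => j' /imsetP [i]; rewrite /H inE => xi ->; rewrite in_set (colour_nonloop xi).
have : colour @: H == [set j | x \in L j].
  by rewrite eqEcard sub card_in_imset //= card_nonloop_colours; apply: leqnn.
move/eqP => eqH; have : j \in colour @: H by rewrite eqH inE.
by case/imsetP => i; rewrite /H inE => xi ->; exists i.
Qed.

Lemma mrank_N_le j A : mrank (N j) A <= \sum_(i | colour i == j) minn #|A :&: X i| (t i).
Proof.
rewrite -mrankI_nonloops ?N_matroid //.
have cover : A :&: L j \subset \bigcup_(i | colour i == j) (A :&: X i).
  apply/subsetP => x /setIP [xA xL]; have [i xi ci] := colour_cover xL.
  by apply/bigcupP; exists i; rewrite ?ci ?inE ?xA.
apply: leq_trans (mrankS (N_matroid j) cover) _; apply: leq_trans (mrank_bigcup (N_matroid j) _ _) _.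
apply: leq_sum => i /eqP ci; rewrite leq_min mrank_le_card ?N_matroid //= -ci.
by apply: leq_trans (colour_mrank i); apply: (mrankS (N_matroid _)); apply: subsetIr.
Qed.

Lemma mrank_N j A : mrank (N j) A = \sum_(i | colour i == j) minn #|A :&: X i| (t i).
Proof.
apply/eqP; rewrite eqn_leq mrank_N_le leqNgt; apply/negP => lt.
have : \sum_j' mrank (N j') A < \sum_j' \sum_(i | colour i == j') minn #|A :&: X i| (t i).
  rewrite (bigD1 j) //= [X in _ < X](bigD1 j) //= -addSn leq_add //.
  by apply: leq_sum => j' _; apply: mrank_N_le.
by rewrite -hyper_rank_sum /hyper_rank (partition_big colour predT) // ltnn.
Qed.

Lemma N_colour_matroids : N = [ffun j => colour_matroid X t colouring j].
Proof.
apply/ffunP => j; rewrite ffunE; apply/setP => B.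
rewrite (indep_mrankE (N_matroid j)) (indep_mrankE (colour_matroid_is_matroid t colouring_proper j)).
rewrite mrank_N (mrank_colour_matroid t colouring_proper).
by congr (_ == _); apply: eq_bigl => i; rewrite ffunE.
Qed.

Lemma colouring_unique c : proper_col X c -> N = [ffun j => colour_matroid X t c j] ->
  c = colouring.
Proof.
move=> c_proper N_c; have Nc j : N j = colour_matroid X t c j by rewrite N_c ffunE.
have cL i : X i \subset L (c i) by rewrite Nc colour_matroid_nonloops.
apply/ffunP => i; rewrite ffunE; case: (ltnP 1 #|X i|) => [gt1 | le1].
  apply: fits_unique (t_lt gt1) _ (colour_fit gt1).
  by rewrite /fits cL Nc mrank_colour_matroid_edge.
have /set0Pn [x xi] := X_nonempty i.
have [h xh ch] := colour_cover (subsetP (cL i) x xi).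
case: (eqVneq h i) ch => [-> -> // | hi ch].
have gt1 : 1 < #|X h|.
  by rewrite ltnNge; apply: contra hi => le1h; rewrite (singleton_uniq le1h le1 xh xi).
have fit_h : fits (c h) h by rewrite /fits cL Nc mrank_colour_matroid_edge.
have := fits_unique (t_lt gt1) fit_h (colour_fit gt1); rewrite ch => chi.
by move: hi; rewrite (same_colour_eq c_proper xh xi chi) eqxx.
Qed.

End Decomposition.

Lemma proper_col_widen (E : finType) (n : nat) (X : 'I_n -> {set E}) m k
  (c : {ffun 'I_n -> 'I_m}) (le_mk : m <= k) :
  proper_col X c -> proper_col X [ffun i => widen_ord le_mk (c i)].
Proof.
move=> c_proper; apply/forallP => i; apply/forallP => i'; apply/implyP => adj.
by rewrite !ffunE; have /implyP := forallP (forallP c_proper i) i'; apply.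
Qed.

Section Classification.
Variables (E : finType) (n : nat) (X : 'I_n -> {set E}) (t : 'I_n -> nat).
Hypothesis t_gt0 : forall i, 0 < t i.
Hypothesis X_linear : forall i i', i != i' -> #|X i :&: X i'| <= 1.
Hypothesis t_lt : forall i, 1 < #|X i| -> t i < #|X i|.
Hypothesis no_triangle : ~ exists a b c : E, [/\ a != b, a != c, b != c &
  [/\ exists i, X i = [set a; b], exists i, X i = [set a; c] & exists i, X i = [set b; c]]].
Hypothesis X_inj : injective X.
Hypothesis X_nonempty : forall i, X i != set0.
Variables (k : nat) (k_gt0 : 0 < k).

Definition decomposition_of (c : {c : {ffun 'I_n -> 'I_k} | proper_col X c}) :
  {N : {ffun 'I_k -> {set {set E}}} | N \in Delta k (hyper_rank X t)} :=
  exist _ [ffun j => colour_matroid X t (val c) j] (colour_matroids_in_Delta t (valP c)).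

Lemma decomposition_of_bij : bijective decomposition_of.
Proof.
pose colouring_of (N : {N : {ffun 'I_k -> {set {set E}}} | N \in Delta k (hyper_rank X t)}) :
    {c : {ffun 'I_n -> 'I_k} | proper_col X c} :=
  exist _ (colouring X t (val N) k_gt0)
    (colouring_proper t_gt0 X_linear (valP N) k_gt0 t_lt no_triangle X_inj X_nonempty).
exists colouring_of => [c | N]; apply: val_inj => /=; last first.
  by rewrite -(N_colour_matroids t_gt0 X_linear (valP N)).
apply/esym/(colouring_unique t_gt0 X_linear (colour_matroids_in_Delta t (valP c))) => //.
exact: valP c.
Qed.

Lemma card_Delta : #|Delta k (hyper_rank X t)| = chrom_poly X k.
Proof.
have := bij_eq_card decomposition_of_bij; rewrite !card_sig => card_eq.
transitivity #|[pred N | N \in Delta k (hyper_rank X t)]|; first exact: eq_card.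
by rewrite -card_eq; apply: eq_card => c; rewrite !inE.
Qed.

Lemma Delta_neq0 : Delta k (hyper_rank X t) != set0 <-> chrom_number X <= k.
Proof.
rewrite /chrom_number; case: ex_minnP => m /existsP [c c_proper] min_m; split.
  case/set0Pn => N N_Delta; apply: min_m; apply/existsP; exists (colouring X t N k_gt0).
  exact: (colouring_proper t_gt0 X_linear N_Delta k_gt0 t_lt no_triangle X_inj X_nonempty).
move=> le_mk; apply/set0Pn; exists [ffun j => colour_matroid X t [ffun i => widen_ord le_mk (c i)] j].
exact/colour_matroids_in_Delta/proper_col_widen.
Qed.
End Classification.

Theorem theorem2p7 (E : finType) (n : nat) (X : 'I_n -> {set E}) (t : 'I_n -> nat)
  (Xinj : injective X)
  (Xne : forall i, X i != set0)
  (tle : forall i, t i <= #|X i|)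
  (H2 : forall i j, i != j -> #|X i :&: X j| <= 1)
  (H3 : ~ exists a b c : E, [/\ a != b, a != c, b != c &
          [/\ exists i, X i = [set a; b], exists i, X i = [set a; c] &
              exists i, X i = [set b; c]]])
  (T : forall i, t i = 1 \/
        ((exists2 e, e \in X i & weight X e <= t i) /\ t i < #|X i|)) :
  let rho := fun A : {set E} => \sum_(i < n) minn #|A :&: X i| (t i) in
  (forall k, 0 < k ->
     exists f : {c : {ffun 'I_n -> 'I_k} | proper_col X c} ->
                {N : {ffun 'I_k -> {set {set E}}} | N \in Delta k rho},
       bijective f) /\
  (forall k, 0 < k -> (Delta k rho != set0 <-> chrom_number X <= k)) /\
  (forall k, 0 < k -> #|Delta k rho| = chrom_poly X k).
Proof.
have t_gt0 i : 0 < t i.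
  case: (T i) => [-> // | [[e ei le_w] _]]; apply: leq_trans le_w.
  by apply/card_gt0P; exists i; rewrite inE.
have t_lt i : 1 < #|X i| -> t i < #|X i| by case: (T i) => [-> | []].
rewrite -/(hyper_rank X t); split; [|split] => k k_gt0.
- exists (@decomposition_of E n X t k).
  exact: (decomposition_of_bij t_gt0 H2 t_lt H3 Xinj Xne k_gt0).
- exact: (Delta_neq0 t_gt0 H2 t_lt H3 Xinj Xne k_gt0).
- exact: (card_Delta t_gt0 H2 t_lt H3 Xinj Xne k_gt0).
Qed.
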